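(* Let $A$ be an eNTA. The language $\mathfrak L(A)$ is suffix-periodic: there exist $t_{per}>0$ and an integer $L>0$ with the following property. Suppose $$\lambda=(t_1,a_1),\dots,(t_{r-1},a_{r-1}),(t_r,a_r),(t_{r+1},a_{r+1}),\dots,(t_{r+m},a_{r+m})$$ is an observable timed trace in $\mathfrak L(A)$ with $t_r>t_{per}$, and let $K\in L\mathbb Z$ satisfy $t_r+K>t_{per}$. Then there exists an observable timed trace $\lambda'\in\mathfrak L(A)$ of the form $$\lambda'=(t_1',a_1'),\dots,(t_s',a_s'),(t_r+K,a_r),(t_{r+1}+K,a_{r+1}),\dots,(t_{r+m}+K,a_{r+m})$$ for some $s\ge0$, times $t_j'$ and actions $a_j'\in\Sigma$.
   Context: **Automata.** An eNTA (non-deterministic timed automaton with silent transitions) is a tuple $A=(\mathcal Q,q_0,\Sigma_\epsilon,\mathcal C,\mathcal T)$ with the following components. - $\mathcal Q$ is a finite set of locations and $q_0$ is the initial location. - $\Sigma$ is a finite set of observable actions, and $\Sigma_\epsilon=\Sigma\cup\{\epsilon\}$, where $\epsilon$ is silent. - $\mathcal C$ is a finite set of clocks. - $\mathcal T$ is a finite set of transitions $(q,a,g,\mathcal C_{rst},q')$ with $a\in\Sigma_\epsilon$, $\mathcal C_{rst}\subseteq\mathcal C$ the clocks reset, and guard $g$ a finite conjunction of constraints $c\sim n$, where $\sim\in\{<,\le,=,\ge,>\}$ and $n\in\mathbb N_0$. **Runs.** A run is a finite sequence $$(q_0,\mathbf 0)\xrightarrow{d_1}(q_0,d_1)\xrightarrow{\tau_1}(q_1,v_1)\xrightarrow{d_2}\cdots\xrightarrow{\tau_k}(q_k,v_k),$$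 where $d_i\ge0$, $\tau_i=(q_{i-1},a_i,g_i,\mathcal C_i,q_i)\in\mathcal T$, $v_0=\mathbf 0$, $v_{i-1}+d_i\models g_i$, and $v_i$ equals $v_{i-1}+d_i$ with the clocks of $\mathcal C_i$ set to $0$. **Traces and language.** The timed trace of a run is $(t_1,a_1),\dots,(t_k,a_k)$ with $t_i=d_1+\dots+d_i$. The observable timed trace is obtained by deleting all pairs with $a_i=\epsilon$. The language $\mathfrak L(A)$ is the set of observable timed traces of all runs of $A$ (all locations are accepting). *)

From Stdlib Require Import Reals List ZArith.
Open Scope R_scope.

Inductive cmp := CLt | CLe | CEq | CGe | CGt.

Definition cmp_sat (c : cmp) (x y : R) : Prop :=
  match c with
  | CLt => x < y | CLe => x <= y | CEq => x = y | CGe => x >= y | CGt => x > y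
  end.

Definition clock := nat.
Definition constr : Type := (clock * cmp * nat)%type.
Definition guard := list constr.
Definition valuation := clock -> R.

Definition guard_sat (g : guard) (v : valuation) : Prop :=
  Forall (fun k => match k with (c, o, n) => cmp_sat o (v c) (INR n) end) g.

(* Transition (q, a, g, C_rst, q'); a = None is the silent action epsilon. *)
Record transition (Loc Sigma : Type) := mkTrans {
  t_src : Loc; t_act : option Sigma; t_guard : guard;
  t_reset : list clock; t_dst : Loc }.
Arguments t_src {Loc Sigma}. Arguments t_act {Loc Sigma}.
Arguments t_guard {Loc Sigma}. Arguments t_reset {Loc Sigma}.
Arguments t_dst {Loc Sigma}.

Record eNTA (Sigma : Type) := mkENTA {
  Loc : Type;
  locs : list Loc;
  q0 : Loc;
  q0_in : In q0 locs;
  alphabet : list Sigma;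
  clocks : list clock;
  trans : list (transition Loc Sigma);
  trans_wf : forall tr, In tr trans ->
    In (t_src tr) locs /\ In (t_dst tr) locs /\
    (forall a, t_act tr = Some a -> In a alphabet) /\
    (forall k, In k (t_guard tr) -> In (fst (fst k)) clocks) /\
    (forall c, In c (t_reset tr) -> In c clocks) }.
Arguments Loc {Sigma}. Arguments q0 {Sigma}. Arguments trans {Sigma}.

Definition reset (rs : list clock) (v : valuation) : valuation :=
  fun c => if in_dec Nat.eq_dec c rs then 0 else v c.

Definition delay (v : valuation) (d : R) : valuation := fun c => v c + d.

Fixpoint run_ok {Sigma} (A : eNTA Sigma) (q : Loc A) (v : valuation)
    (steps : list (R * transition (Loc A) Sigma)) : Prop :=
  match steps with
  | nil => True
  | (d, tr) :: rest =>
      0 <= d /\ In tr (trans A) /\ t_src tr = q /\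
      guard_sat (t_guard tr) (delay v d) /\
      run_ok A (t_dst tr) (reset (t_reset tr) (delay v d)) rest
  end.

Fixpoint obs_trace {L Sigma} (t : R) (steps : list (R * transition L Sigma))
    : list (R * Sigma) :=
  match steps with
  | nil => nil
  | (d, tr) :: rest =>
      match t_act tr with
      | Some a => (t + d, a) :: obs_trace (t + d) rest
      | None => obs_trace (t + d) rest
      end
  end.

Definition in_lang {Sigma} (A : eNTA Sigma) (lam : list (R * Sigma)) : Prop :=
  exists steps, run_ok A (q0 A) (fun _ => 0) steps /\ obs_trace 0 steps = lam.

Definition shift_trace {Sigma} (K : R) (s : list (R * Sigma)) : list (R * Sigma) :=
  map (fun p => (fst p + K, snd p)) s.

From Stdlib Require Import Reals List ZArith Lra Lia.
From Stdlib Require Import Classical ClassicalEpsilon FunctionalExtensionality FinFun.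
Open Scope R_scope.

(* Two valuations that agree on every clock, except on clocks where both exceed the
   largest guard constant M, enable the same runs.  At an integer time a configuration
   is abstracted by its region key: the location and, for every clock below M, the
   integer part of the date of its last reset, whether that date is an integer, and the
   order of the fractional parts of these dates.  Retiming a run by an increasing
   bijection psi of R commuting with integer translations yields a run again, and psi
   can carry any finite set of fractional parts onto any other one in the same order;
   so configurations with the same key reached at the same integer time are
   interchangeable up to agreement above M.  Hence the set of keys reachable at time
   n+1 is determined by the set reachable at time n; there are finitely many such
   sets, so they are eventually periodic, from some i on with some period L.  A run
   whose trace has an event at t_r > i+1 is cut at N = floor t_r; an equivalent
   configuration is reachable at N + L k, from which the rest of the run is replayed
   shifted by L k. *)

Lemma Int_part_bounds (s : R) : IZR (Int_part s) <= s < IZR (Int_part s) + 1.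
Proof. destruct (base_Int_part s); lra. Qed.

Lemma Int_part_unique (s : R) (z : Z) : IZR z <= s < IZR z + 1 -> Int_part s = z.
Proof. intros Hz; symmetry; apply Int_part_spec; lra. Qed.

Lemma Int_part_add_IZR (s : R) (m : Z) : Int_part (s + IZR m) = (Int_part s + m)%Z.
Proof. apply Int_part_unique; rewrite plus_IZR; pose proof (Int_part_bounds s); lra. Qed.

Lemma frac_part_add_IZR (s : R) (m : Z) : frac_part (s + IZR m) = frac_part s.
Proof. unfold frac_part; rewrite Int_part_add_IZR, plus_IZR; ring. Qed.

Lemma Int_part_le (s t : R) : s <= t -> (Int_part s <= Int_part t)%Z.
Proof.
  intros Hst; pose proof (Int_part_bounds s); pose proof (Int_part_bounds t).
  apply Z.lt_succ_r, lt_IZR; rewrite succ_IZR; lra.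
Qed.

Lemma delay_0 (v : valuation) : delay v 0 = v.
Proof. apply functional_extensionality; intro c; unfold delay; ring. Qed.

Lemma delay_delay (v : valuation) (d e : R) : delay (delay v d) e = delay v (d + e).
Proof. apply functional_extensionality; intro c; unfold delay; ring. Qed.

Lemma obs_trace_shift {L Sigma} (steps : list (R * transition L Sigma)) (t K : R) :
  obs_trace (t + K) steps = shift_trace K (obs_trace t steps).
Proof.
  revert t; induction steps as [|[d tr] steps IH]; intros t; simpl; [reflexivity|].
  replace (t + K + d) with (t + d + K) by ring.
  destruct (t_act tr); simpl; rewrite IH; reflexivity.
Qed.

Fixpoint words {T} (n : nat) (l : list T) : list (list T) :=
  match n with
  | O => nil :: nil
  | S n => flat_map (fun x => map (cons x) (words n l)) l
  end.

Lemma in_words {T} (n : nat) (l w : list T) :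
  length w = n -> (forall x, In x w -> In x l) -> In w (words n l).
Proof.
  revert w; induction n as [|n IH]; intros [|x w] Hlen Hw; simpl in *; try discriminate; auto.
  apply in_flat_map; exists x; split; auto.
  apply in_map, IH; auto.
Qed.

Lemma pigeonhole {T} (f : nat -> T) (U : list T) :
  (forall n, In (f n) U) -> exists i j, (i < j)%nat /\ f i = f j.
Proof.
  intros HU; apply NNPP; intros Hnone.
  assert (Hinj : Injective f).
  { intros i j Hij; destruct (Nat.lt_total i j) as [?|[?|?]]; auto;
      exfalso; apply Hnone; eauto. }
  assert (Hnodup : NoDup (map f (seq 0 (S (length U)))))
    by (apply Injective_map_NoDup; [exact Hinj | apply seq_NoDup]).
  apply NoDup_incl_length with (l' := U) in Hnodup.
  - rewrite length_map, length_seq in Hnodup; lia.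
  - intros x Hx; apply in_map_iff in Hx; destruct Hx as (n & <- & _); auto.
Qed.

Lemma iterated_image_eventually_periodic {K} (X : nat -> K -> Prop) (dom : list K)
    (step : K -> K -> Prop) :
  (forall n k, X n k -> In k dom) ->
  (forall n k', X (S n) k' <-> exists k, X n k /\ step k k') ->
  exists i L, (L > 0)%nat /\ forall n n' (z : Z) k, (i <= n)%nat -> (i <= n')%nat ->
    Z.of_nat n' = (Z.of_nat n + Z.of_nat L * z)%Z -> (X n k <-> X n' k).
Proof.
  intros Hdom Hstep.
  set (code n := map (fun k => if excluded_middle_informative (X n k) then true else false) dom).
  destruct (pigeonhole code (words (length dom) (true :: false :: nil))) as (i & j & Hij & Hcode).
  { intros n; apply in_words; [apply length_map|].
    intros b _; destruct b; simpl; auto. }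
  assert (Hsame : forall k, X i k <-> X j k).
  { intros k; destruct (classic (In k dom)) as [Hk|Hk].
    - apply map_ext_in_iff with (a := k) in Hcode; [|exact Hk]; simpl in Hcode.
      do 2 destruct excluded_middle_informative; try discriminate; tauto.
    - split; intros H; exfalso; apply Hk; eapply Hdom; eauto. }
  assert (Hafter : forall m k, X (i + m)%nat k <-> X (j + m)%nat k).
  { induction m as [|m IH]; intros k; [rewrite !Nat.add_0_r; apply Hsame|].
    rewrite !Nat.add_succ_r, !Hstep.
    split; intros (k0 & H1 & H2); exists k0; split; auto; apply IH; auto. }
  assert (Hperiod : forall n t k, (i <= n)%nat -> X n k <-> X (n + t * (j - i))%nat k).
  { intros n t k Hn; induction t as [|t IH]; [rewrite Nat.add_0_r; tauto|].
    rewrite IH.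
    replace (n + t * (j - i))%nat with (i + (n + t * (j - i) - i))%nat by nia.
    replace (n + S t * (j - i))%nat with (j + (n + t * (j - i) - i))%nat by nia.
    apply Hafter. }
  exists i, (j - i)%nat; split; [lia|].
  intros n n' z k Hn Hn' Hz; destruct (Z_le_gt_dec 0 z).
  - replace n' with (n + Z.to_nat z * (j - i))%nat by lia; apply Hperiod; exact Hn.
  - replace n with (n' + Z.to_nat (- z) * (j - i))%nat by lia.
    symmetry; apply Hperiod; exact Hn'.
Qed.

Section Interpolation.
Variable P : list (R * R).

Definition lower_val (s : R) : R :=
  fold_right (fun p m => if Rle_dec (fst p) s then Rmax (snd p) m else m) 0 P.
Definition upper_val (s : R) : R :=
  fold_right (fun p m => if Rle_dec s (fst p) then Rmin (snd p) m else m) 1 P.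

Lemma lower_val_ge0 (s : R) : 0 <= lower_val s.
Proof.
  unfold lower_val; induction P as [|p P' IH]; simpl; [lra|].
  destruct Rle_dec; [eapply Rle_trans; [exact IH | apply Rmax_r] | exact IH].
Qed.

Lemma lower_val_ub (s : R) (p : R * R) : In p P -> fst p <= s -> snd p <= lower_val s.
Proof.
  unfold lower_val; induction P as [|p' P' IH]; simpl; intros Hp Hs; [tauto|].
  destruct Hp as [<- | Hp]; destruct Rle_dec; try contradiction; [apply Rmax_l| |auto].
  eapply Rle_trans; [apply IH; auto | apply Rmax_r].
Qed.

Lemma lower_val_cases (s : R) :
  lower_val s = 0 \/ exists p, In p P /\ fst p <= s /\ snd p = lower_val s.
Proof.
  unfold lower_val; induction P as [|p P' IH]; simpl; [auto|].
  destruct Rle_dec as [Hp|]; [unfold Rmax; destruct Rle_dec|];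
    try (right; exists p; tauto);
    (destruct IH as [H | (p' & H1 & H2 & H3)]; [auto | right; exists p'; tauto]).
Qed.

Lemma lower_val_ext (s t : R) :
  (forall p, In p P -> (fst p <= s <-> fst p <= t)) -> lower_val s = lower_val t.
Proof.
  unfold lower_val; induction P as [|p P' IH]; simpl; intros Hst; [reflexivity|].
  rewrite IH by auto.
  destruct (Hst p (or_introl eq_refl)), (Rle_dec (fst p) s), (Rle_dec (fst p) t); tauto.
Qed.

Lemma upper_val_le1 (s : R) : upper_val s <= 1.
Proof.
  unfold upper_val; induction P as [|p P' IH]; simpl; [lra|].
  destruct Rle_dec; [eapply Rle_trans; [apply Rmin_r | exact IH] | exact IH].
Qed.

Lemma upper_val_lb (s : R) (p : R * R) : In p P -> s <= fst p -> upper_val s <= snd p.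
Proof.
  unfold upper_val; induction P as [|p' P' IH]; simpl; intros Hp Hs; [tauto|].
  destruct Hp as [<- | Hp]; destruct Rle_dec; try contradiction; [apply Rmin_l| |auto].
  eapply Rle_trans; [apply Rmin_r | apply IH; auto].
Qed.

Lemma upper_val_cases (s : R) :
  upper_val s = 1 \/ exists p, In p P /\ s <= fst p /\ snd p = upper_val s.
Proof.
  unfold upper_val; induction P as [|p P' IH]; simpl; [auto|].
  destruct Rle_dec as [Hp|]; [unfold Rmin; destruct Rle_dec|];
    try (right; exists p; tauto);
    (destruct IH as [H | (p' & H1 & H2 & H3)]; [auto | right; exists p'; tauto]).
Qed.

Lemma upper_val_le (s t : R) : s <= t -> upper_val s <= upper_val t.
Proof.
  unfold upper_val; induction P as [|p P' IH]; simpl; intros Hst; [lra|].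
  specialize (IH Hst).
  destruct (Rle_dec t (fst p)), (Rle_dec s (fst p)); try lra.
  - apply Rmin_glb; [apply Rmin_l | eapply Rle_trans; [apply Rmin_r | exact IH]].
  - eapply Rle_trans; [apply Rmin_r | exact IH].
Qed.

Hypothesis P_range : forall p, In p P ->
  0 <= fst p < 1 /\ 0 <= snd p < 1 /\ (fst p = 0 <-> snd p = 0).
Hypothesis P_order : forall p q, In p P -> In q P -> (fst p < fst q <-> snd p < snd q).

(* Linear interpolation between the neighbouring values; the weight [s] makes it
   strictly increasing also on the gaps between the points of [P]. *)
Definition interp (s : R) : R := lower_val s + s * (upper_val s - lower_val s).

Lemma lower_val_lt1 (s : R) : lower_val s < 1.
Proof.
  destruct (lower_val_cases s) as [-> | (p & Hp & _ & <-)]; [lra | apply P_range; auto].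
Qed.

Lemma lower_val_lt_snd (s : R) (p : R * R) :
  0 <= s -> In p P -> s < fst p -> lower_val s < snd p.
Proof.
  intros Hs Hp Hsp; destruct (P_range p Hp) as (H1 & H2 & H3).
  destruct (lower_val_cases s) as [-> | (q & Hq & Hqs & <-)].
  - destruct (Rle_lt_or_eq_dec 0 (snd p)) as [|Hz]; [lra | auto |].
    symmetry in Hz; apply H3 in Hz; lra.
  - apply (P_order q p); auto; lra.
Qed.

Lemma lower_val_le_upper (s : R) : lower_val s <= upper_val s.
Proof.
  destruct (upper_val_cases s) as [-> | (p & Hp & Hsp & <-)]; [left; apply lower_val_lt1|].
  destruct (lower_val_cases s) as [-> | (q & Hq & Hqs & <-)]; [apply P_range; auto|].
  destruct (Rle_lt_dec (snd q) (snd p)) as [|Hlt]; auto.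
  apply (P_order p q) in Hlt; auto; lra.
Qed.

Lemma lower_val_lt_upper (s : R) :
  0 <= s -> (forall p, In p P -> fst p <> s) -> lower_val s < upper_val s.
Proof.
  intros Hs Hnot; destruct (upper_val_cases s) as [-> | (p & Hp & Hsp & <-)].
  - apply lower_val_lt1.
  - apply lower_val_lt_snd; auto; specialize (Hnot p Hp); lra.
Qed.

Lemma interp_pt (p : R * R) : In p P -> interp (fst p) = snd p.
Proof.
  intros Hp; destruct (P_range p Hp) as (H1 & H2 & H3).
  assert (Hlo : lower_val (fst p) = snd p).
  { apply Rle_antisym; [|apply lower_val_ub; auto; lra].
    destruct (lower_val_cases (fst p)) as [-> | (q & Hq & Hqp & <-)]; [lra|].
    destruct (Rle_lt_dec (snd q) (snd p)); auto.
    exfalso; apply (P_order p q) in r; auto; lra. }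
  assert (Hup : upper_val (fst p) = snd p).
  { apply Rle_antisym; [apply upper_val_lb; auto; lra|].
    destruct (upper_val_cases (fst p)) as [-> | (q & Hq & Hqp & <-)]; [lra|].
    destruct (Rle_lt_dec (snd p) (snd q)); auto.
    exfalso; apply (P_order q p) in r; auto; lra. }
  unfold interp; rewrite Hlo, Hup; ring.
Qed.

Lemma interp_0 : interp 0 = 0.
Proof.
  assert (Hlo : lower_val 0 = 0).
  { destruct (lower_val_cases 0) as [-> | (q & Hq & Hq0 & <-)]; auto.
    apply (P_range q Hq); destruct (P_range q Hq); lra. }
  unfold interp; rewrite Hlo; ring.
Qed.

Lemma interp_range (s : R) : 0 <= s < 1 -> 0 <= interp s < 1.
Proof.
  intros Hs; unfold interp.
  pose proof (lower_val_ge0 s); pose proof (lower_val_le_upper s).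
  pose proof (lower_val_lt1 s); pose proof (upper_val_le1 s).
  split; nra.
Qed.

Lemma interp_lt (s t : R) : 0 <= s -> s < t -> t < 1 -> interp s < interp t.
Proof.
  intros Hs Hst Ht; unfold interp.
  pose proof (lower_val_le_upper s); pose proof (lower_val_le_upper t).
  destruct (classic (exists p, In p P /\ s < fst p <= t)) as [(p & Hp & H1 & H2) | Hnone].
  - pose proof (lower_val_lt_snd s p Hs Hp H1).
    pose proof (upper_val_lb s p Hp (Rlt_le _ _ H1)).
    pose proof (lower_val_ub t p Hp H2).
    nra.
  - assert (Hlo : lower_val s = lower_val t).
    { apply lower_val_ext; intros p Hp; split; intros; [lra|].
      destruct (Rle_dec (fst p) s); auto.
      exfalso; apply Hnone; exists p; split; auto; lra. }
    assert (Hgap : lower_val t < upper_val t).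
    { apply lower_val_lt_upper; [lra|]; intros p Hp Heq.
      apply Hnone; exists p; split; auto; lra. }
    pose proof (upper_val_le s t (Rlt_le _ _ Hst)).
    rewrite Hlo in *; nra.
Qed.

End Interpolation.

Record retiming (psi : R -> R) : Prop := {
  retiming_lt : forall s t, s < t -> psi s < psi t;
  retiming_add_IZR : forall s m, psi (s + IZR m) = psi s + IZR m;
  retiming_0 : psi 0 = 0 }.

Lemma retiming_exists (P : list (R * R)) :
  (forall p, In p P -> 0 <= fst p < 1 /\ 0 <= snd p < 1 /\ (fst p = 0 <-> snd p = 0)) ->
  (forall p q, In p P -> In q P -> (fst p < fst q <-> snd p < snd q)) ->
  exists psi, retiming psi /\ forall p, In p P -> psi (fst p) = snd p.
Proof.
  intros Hrange Horder.
  exists (fun s => IZR (Int_part s) + interp P (frac_part s)); split; [split|].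
  - intros s t Hst.
    pose proof (base_fp s) as Hs; pose proof (base_fp t) as Ht.
    pose proof (interp_range P Hrange Horder (frac_part s) ltac:(lra)).
    pose proof (interp_range P Hrange Horder (frac_part t) ltac:(lra)).
    destruct (Z.eq_dec (Int_part s) (Int_part t)) as [Heq|Hne].
    + rewrite Heq; apply Rplus_lt_compat_l, interp_lt; auto; try lra.
      unfold frac_part; rewrite Heq; lra.
    + pose proof (Int_part_le s t (Rlt_le _ _ Hst)).
      assert (Hsucc : IZR (Int_part s) + 1 <= IZR (Int_part t))
        by (rewrite <- succ_IZR; apply IZR_le; lia).
      lra.
  - intros s m; rewrite Int_part_add_IZR, frac_part_add_IZR, plus_IZR; ring.
  - rewrite (Int_part_unique 0 0) by (simpl; lra).
    rewrite fp_R0, interp_0 by auto; simpl; ring.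
  - intros p Hp; destruct (Hrange p Hp) as (H1 & _ & _).
    assert (Hfrac : frac_part (fst p) = fst p).
    { unfold frac_part; rewrite (Int_part_unique (fst p) 0) by (simpl; lra); simpl; ring. }
    rewrite (Int_part_unique (fst p) 0), Hfrac, interp_pt by (simpl; auto; lra).
    simpl; ring.
Qed.

Section Retiming.
Variable psi : R -> R.
Hypothesis psi_retiming : retiming psi.

Lemma retiming_lt_iff (s t : R) : psi s < psi t <-> s < t.
Proof.
  split; [|apply retiming_lt; auto]; intros Hlt.
  destruct (Rlt_le_dec s t) as [|[Hts | <-]]; auto;
    [apply (retiming_lt psi psi_retiming) in Hts|]; lra.
Qed.

Lemma retiming_eq_iff (s t : R) : psi s = psi t <-> s = t.
Proof.
  split; [|intros ->; reflexivity]; intros Heq.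
  destruct (Rtotal_order s t) as [Hlt | [Hst | Hlt]]; auto;
    apply retiming_lt_iff in Hlt; lra.
Qed.

Lemma retiming_IZR (m : Z) : psi (IZR m) = IZR m.
Proof.
  rewrite <- (Rplus_0_l (IZR m)), retiming_add_IZR, retiming_0 by auto; reflexivity.
Qed.

Lemma retiming_add_INR (s : R) (n : nat) : psi (s + INR n) = psi s + INR n.
Proof. rewrite INR_IZR_INZ; apply retiming_add_IZR; auto. Qed.

(* After retiming, a clock reset at date [t - x] has value [psi t - psi (t - x)] at
   date [psi t]. *)
Lemma cmp_sat_retiming (o : cmp) (x t : R) (n : nat) :
  cmp_sat o x (INR n) <-> cmp_sat o (psi t - psi (t - x)) (INR n).
Proof.
  pose proof (retiming_add_INR (t - x) n) as Hshift.
  assert (Hlt : x < INR n <-> psi t - psi (t - x) < INR n).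
  { transitivity (t < t - x + INR n); [split; intros; lra|].
    rewrite <- retiming_lt_iff, Hshift; split; intros; lra. }
  assert (Hgt : INR n < x <-> INR n < psi t - psi (t - x)).
  { transitivity (t - x + INR n < t); [split; intros; lra|].
    rewrite <- retiming_lt_iff, Hshift; split; intros; lra. }
  assert (Heq : x = INR n <-> psi t - psi (t - x) = INR n).
  { transitivity (t = t - x + INR n); [split; intros; lra|].
    rewrite <- retiming_eq_iff, Hshift; split; intros; lra. }
  destruct o; simpl; unfold Rge, Rgt, Rle; tauto.
Qed.

Definition retime_val (t : R) (v : valuation) : valuation := fun c => psi t - psi (t - v c).

Lemma retime_val_zero (t : R) : retime_val t (fun _ => 0) = fun _ => 0.
Proof. apply functional_extensionality; intro c; unfold retime_val; rewrite Rminus_0_r; ring. Qed.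

Lemma retime_val_delay (t d : R) (v : valuation) :
  delay (retime_val t v) (psi (t + d) - psi t) = retime_val (t + d) (delay v d).
Proof.
  apply functional_extensionality; intro c; unfold retime_val, delay.
  replace (t + d - (v c + d)) with (t - v c) by ring; ring.
Qed.

Lemma retime_val_reset (t : R) (rs : list clock) (v : valuation) :
  reset rs (retime_val t v) = retime_val t (reset rs v).
Proof.
  apply functional_extensionality; intro c; unfold retime_val, reset.
  destruct in_dec; [rewrite Rminus_0_r; ring | reflexivity].
Qed.

Lemma guard_sat_retime_val (g : guard) (t : R) (v : valuation) :
  guard_sat g v -> guard_sat g (retime_val t v).
Proof.
  unfold guard_sat; rewrite !Forall_forall; intros Hg [[c o] n] Hk.
  apply cmp_sat_retiming, (Hg _ Hk).
Qed.

End Retiming.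

Section Automaton.
Variable Sigma : Type.
Variable A : eNTA Sigma.

Local Notation Clocks := (clocks Sigma A).

Definition max_const : nat :=
  list_max (flat_map (fun tr => map snd (t_guard tr)) (trans A)).

Local Notation M := (INR max_const).

Lemma guard_constr_bound (tr : transition (Loc A) Sigma) (k : constr) :
  In tr (trans A) -> In k (t_guard tr) -> (snd k <= max_const)%nat /\ In (fst (fst k)) Clocks.
Proof.
  intros Htr Hk; split.
  - assert (Hall := proj1 (list_max_le _ max_const) (le_n _)).
    rewrite Forall_forall in Hall; apply Hall, in_flat_map.
    exists tr; split; [exact Htr | apply in_map, Hk].
  - destruct (trans_wf Sigma A tr Htr) as (_ & _ & _ & Hg & _); apply Hg, Hk.
Qed.

Definition max_equiv (v w : valuation) : Prop :=
  forall c, In c Clocks -> v c = w c \/ (v c > M /\ w c > M).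

Lemma max_equiv_delay (v w : valuation) (d : R) :
  0 <= d -> max_equiv v w -> max_equiv (delay v d) (delay w d).
Proof.
  unfold max_equiv, delay; intros Hd Hequiv c Hc.
  destruct (Hequiv c Hc); [left | right]; lra.
Qed.

Lemma max_equiv_reset (rs : list clock) (v w : valuation) :
  max_equiv v w -> max_equiv (reset rs v) (reset rs w).
Proof. unfold max_equiv, reset; intros Hequiv c Hc; destruct in_dec; auto. Qed.

Lemma guard_sat_max_equiv (tr : transition (Loc A) Sigma) (v w : valuation) :
  In tr (trans A) -> max_equiv v w -> guard_sat (t_guard tr) w -> guard_sat (t_guard tr) v.
Proof.
  unfold guard_sat; rewrite !Forall_forall; intros Htr Hequiv Hg [[c o] n] Hk.
  specialize (Hg _ Hk); simpl in Hg |- *.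
  destruct (guard_constr_bound tr _ Htr Hk) as [Hn Hc]; apply le_INR in Hn; simpl in Hn, Hc.
  destruct (Hequiv c Hc) as [-> | [Hv Hw]]; [exact Hg|].
  destruct o; simpl in *; lra.
Qed.

Lemma run_ok_max_equiv (steps : list (R * transition (Loc A) Sigma)) (q : Loc A) (v w : valuation) :
  max_equiv v w -> run_ok A q w steps -> run_ok A q v steps.
Proof.
  revert q v w; induction steps as [|[d tr] steps IH]; simpl; [auto|].
  intros q v w Hequiv (Hd & Htr & Hsrc & Hg & Hrest); repeat split; auto.
  - apply (guard_sat_max_equiv tr _ (delay w d)); auto; apply max_equiv_delay; auto.
  - apply (IH _ _ (reset (t_reset tr) (delay w d))); auto.
    apply max_equiv_reset, max_equiv_delay; auto.
Qed.

Inductive reaches : Loc A -> valuation -> R -> Loc A -> valuation -> R -> Prop :=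
| reaches_delay q v t d v' t' :
    0 <= d -> t' = t + d -> v' = delay v d -> reaches q v t q v' t'
| reaches_step q v t tr v' q' :
    In tr (trans A) -> t_src tr = q -> guard_sat (t_guard tr) v ->
    v' = reset (t_reset tr) v -> q' = t_dst tr -> reaches q v t q' v' t
| reaches_trans q1 v1 t1 q2 v2 t2 q3 v3 t3 :
    reaches q1 v1 t1 q2 v2 t2 -> reaches q2 v2 t2 q3 v3 t3 -> reaches q1 v1 t1 q3 v3 t3.

Lemma reaches_refl (q : Loc A) (v : valuation) (t : R) : reaches q v t q v t.
Proof. apply reaches_delay with 0; [lra | ring | symmetry; apply delay_0]. Qed.

Lemma reaches_time_le q v t q' v' t' : reaches q v t q' v' t' -> t <= t'.
Proof. induction 1; lra. Qed.

Lemma reaches_max_equiv q v t q' v' t' (w : valuation) (s : R) :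
  reaches q v t q' v' t' -> max_equiv w v ->
  exists w', reaches q w (t + s) q' w' (t' + s) /\ max_equiv w' v'.
Proof.
  intros Hreach; revert w; induction Hreach; intros w Hequiv; subst.
  - exists (delay w d); split; [apply reaches_delay with d; auto; ring|].
    apply max_equiv_delay; auto.
  - exists (reset (t_reset tr) w); split; [eapply reaches_step; eauto|].
    + eapply guard_sat_max_equiv; eauto.
    + apply max_equiv_reset; auto.
  - destruct (IHHreach1 w Hequiv) as (w2 & H1 & H2).
    destruct (IHHreach2 w2 H2) as (w3 & H3 & H4).
    exists w3; split; [eapply reaches_trans; eauto | exact H4].
Qed.

Lemma reaches_split q v t q' v' t' (m : R) :
  reaches q v t q' v' t' -> t <= m <= t' ->
  exists q'' v'', reaches q v t q'' v'' m /\ reaches q'' v'' m q' v' t'.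
Proof.
  intros Hreach; revert m; induction Hreach; intros m Hm; subst.
  - exists q, (delay v (m - t)); split; [apply reaches_delay with (m - t); auto; lra|].
    apply reaches_delay with (t + d - m); [lra | ring | rewrite delay_delay; f_equal; ring].
  - replace m with t by lra.
    exists (t_src tr), v; split; [apply reaches_refl | eapply reaches_step; eauto].
  - pose proof (reaches_time_le _ _ _ _ _ _ Hreach1).
    pose proof (reaches_time_le _ _ _ _ _ _ Hreach2).
    destruct (Rle_dec m t2).
    + destruct (IHHreach1 m) as (q'' & v'' & H1 & H2); [lra|].
      exists q'', v''; split; [exact H1 | eapply reaches_trans; eauto].
    + destruct (IHHreach2 m) as (q'' & v'' & H1 & H2); [lra|].
      exists q'', v''; split; [eapply reaches_trans; eauto | exact H2].
Qed.

Lemma reaches_run q v t q' v' t' (rest : list (R * transition (Loc A) Sigma)) :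
  reaches q v t q' v' t' -> run_ok A q' v' rest ->
  exists steps pre, run_ok A q v steps /\ obs_trace t steps = pre ++ obs_trace t' rest.
Proof.
  intros Hreach; revert rest; induction Hreach; intros rest Hrest; subst.
  - destruct rest as [|[d1 tr] rest]; [exists nil, nil; simpl; auto|].
    exists ((d + d1, tr) :: rest), nil; simpl in Hrest |- *.
    rewrite delay_delay in Hrest; destruct Hrest as (Hd1 & Htr & Hsrc & Hg & Hr).
    replace (t + d + d1) with (t + (d + d1)) by ring.
    repeat split; auto; lra.
  - exists ((0, tr) :: rest); simpl; rewrite delay_0, Rplus_0_r.
    destruct (t_act tr) as [a|]; [exists ((t, a) :: nil) | exists nil];
      repeat split; auto; lra.
  - destruct (IHHreach2 rest Hrest) as (s2 & p2 & H1 & H2).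
    destruct (IHHreach1 s2 H1) as (s1 & p1 & H3 & H4).
    exists s1, (p1 ++ p2); split; [exact H3|].
    rewrite H4, H2, app_assoc; reflexivity.
Qed.

Lemma run_ok_cut (q : Loc A) (v : valuation) (t : R) steps pre (x : R * Sigma) suf (N : R) :
  run_ok A q v steps -> obs_trace t steps = pre ++ x :: suf -> t <= N <= fst x ->
  exists q' v' rest mid, reaches q v t q' v' N /\ run_ok A q' v' rest /\
    obs_trace N rest = mid ++ x :: suf.
Proof.
  revert q v t pre; induction steps as [|[d tr] steps IH]; intros q v t pre Hrun Hobs HN.
  - destruct pre; discriminate.
  - simpl in Hrun, Hobs; destruct Hrun as (Hd & Htr & Hsrc & Hg & Hrest).
    destruct (Rle_dec N (t + d)).
    + exists q, (delay v (N - t)), ((t + d - N, tr) :: steps), pre; split.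
      { apply reaches_delay with (N - t); auto; lra. }
      split; simpl.
      * rewrite delay_delay; replace (N - t + (t + d - N)) with d by ring.
        repeat split; auto; lra.
      * replace (N + (t + d - N)) with (t + d) by ring; exact Hobs.
    + assert (Hpre : exists pre', obs_trace (t + d) steps = pre' ++ x :: suf).
      { destruct (t_act tr) as [a|]; [|exists pre; exact Hobs].
        destruct pre as [|y pre]; simpl in Hobs; injection Hobs as Hy Hobs;
          [subst x; simpl in HN; lra | exists pre; exact Hobs]. }
      destruct Hpre as [pre' Hpre'].
      destruct (IH _ _ _ _ Hrest Hpre' ltac:(lra))
        as (q' & v' & rest & mid & H1 & H2 & H3).
      exists q', v', rest, mid; split; [|auto].
      eapply reaches_trans; [|exact H1].
      eapply reaches_trans; [apply reaches_delay with d; auto|].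
      eapply reaches_step; eauto.
Qed.

Lemma reaches_wf q v t q' v' t' :
  reaches q v t q' v' t' -> In q (locs Sigma A) -> (forall c, 0 <= v c) ->
  In q' (locs Sigma A) /\ forall c, 0 <= v' c.
Proof.
  induction 1; intros Hq Hv; subst.
  - split; auto; intro c; unfold delay; specialize (Hv c); lra.
  - split; [destruct (trans_wf Sigma A tr H) as (_ & Hdst & _); exact Hdst|].
    intro c; unfold reset; destruct in_dec; auto; lra.
  - destruct IHreaches1; auto.
Qed.

Lemma reaches_retiming (psi : R -> R) q v t q' v' t' :
  retiming psi -> reaches q v t q' v' t' ->
  reaches q (retime_val psi t v) (psi t) q' (retime_val psi t' v') (psi t').
Proof.
  intros Hpsi; induction 1 as [q v t d v' t' Hd Ht Hv| |]; subst.
  - assert (Hle : psi t <= psi (t + d)).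
    { destruct Hd as [Hd | <-]; [left; apply retiming_lt; auto; lra | rewrite Rplus_0_r; lra]. }
    apply reaches_delay with (psi (t + d) - psi t); [lra | ring | symmetry; apply retime_val_delay].
  - rewrite <- retime_val_reset; eapply reaches_step; eauto.
    apply guard_sat_retime_val; auto.
  - eapply reaches_trans; eauto.
Qed.


Definition below_max (v : valuation) (c : clock) : bool :=
  if Rle_dec (v c) M then true else false.

(* At an integer time, [- v c] is the date of the last reset of [c] relative to the
   current time; for a clock below the maximal constant, its region records the
   integer part of that date, whether it is an integer, and the order of its
   fractional part among those of the other clocks below the maximal constant. *)
Definition clock_region (v : valuation) (c : clock) : option (Z * bool * list bool) :=
  if Rle_dec (v c) M then
    Some (Int_part (- v c),
          if Req_EM_T (frac_part (- v c)) 0 then true else false,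
          map (fun d => andb (below_max v d)
                 (if Rlt_dec (frac_part (- v c)) (frac_part (- v d)) then true else false))
            Clocks)
  else None.

Definition region_key (q : Loc A) (v : valuation) := (q, map (clock_region v) Clocks).

Definition region_equiv (v w : valuation) : Prop :=
  forall c, In c Clocks -> (v c <= M <-> w c <= M) /\
    (v c <= M -> Int_part (- v c) = Int_part (- w c) /\
       (frac_part (- v c) = 0 <-> frac_part (- w c) = 0) /\
       forall d, In d Clocks -> v d <= M ->
         (frac_part (- v c) < frac_part (- v d) <-> frac_part (- w c) < frac_part (- w d))).

Lemma region_key_equiv (q q' : Loc A) (v w : valuation) :
  region_key q v = region_key q' w -> q = q' /\ region_equiv v w.
Proof.
  intros Hkey; injection Hkey as Hq Hregions; split; [exact Hq|].
  rewrite map_ext_in_iff in Hregions.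
  intros c Hc; pose proof (Hregions c Hc) as Hrc; unfold clock_region in Hrc.
  destruct (Rle_dec (v c) M) as [Hv|Hv], (Rle_dec (w c) M) as [Hw|Hw];
    try discriminate; [|split; [tauto | intros; lra]].
  injection Hrc as Hint Hzero Hcmp.
  split; [tauto|]; intros _; split; [exact Hint|]; split.
  - do 2 destruct Req_EM_T; try discriminate; tauto.
  - intros d Hd Hvd; rewrite map_ext_in_iff in Hcmp; specialize (Hcmp d Hd).
    pose proof (Hregions d Hd) as Hrd; unfold clock_region in Hrd; unfold below_max in Hcmp.
    destruct (Rle_dec (v d) M); [|lra]; destruct (Rle_dec (w d) M); [|discriminate].
    simpl in Hcmp; do 2 destruct Rlt_dec; try discriminate; tauto.
Qed.

Lemma region_key_max_equiv (q : Loc A) (v w : valuation) :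
  max_equiv v w -> region_key q v = region_key q w.
Proof.
  intros Hequiv; unfold region_key; f_equal; apply map_ext_in; intros c Hc.
  unfold clock_region; destruct (Hequiv c Hc) as [Heq | [Hv Hw]].
  - rewrite Heq; destruct Rle_dec; [|reflexivity].
    do 2 f_equal; apply map_ext_in; intros d Hd; unfold below_max.
    destruct (Hequiv d Hd) as [-> | [Hvd Hwd]]; [reflexivity|].
    do 2 (destruct Rle_dec; [lra|]); reflexivity.
  - do 2 (destruct Rle_dec; [lra|]); reflexivity.
Qed.

Definition reachable_at (t : R) (q : Loc A) (v : valuation) : Prop :=
  reaches (q0 A) (fun _ => 0) 0 q v t.

(* Retime the run with a [psi] sending the fractional parts of the reset dates of [v]
   to those of [w]: it fixes integer dates, so the clocks below [M] become those of [w]. *)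
Lemma reachable_at_region_transfer (N : nat) (q : Loc A) (v w : valuation) :
  reachable_at (INR N) q v -> region_equiv v w ->
  exists v', reachable_at (INR N) q v' /\ max_equiv v' w.
Proof.
  intros Hreach Hequiv.
  set (P := map (fun c => (frac_part (- v c), frac_part (- w c))) (filter (below_max v) Clocks)).
  assert (HP : forall p, In p P -> exists c, In c Clocks /\ v c <= M /\
                 p = (frac_part (- v c), frac_part (- w c))).
  { intros p Hp; apply in_map_iff in Hp; destruct Hp as (c & <- & Hc).
    apply filter_In in Hc; destruct Hc as [Hc Hb]; unfold below_max in Hb.
    destruct Rle_dec; [exists c; auto | discriminate]. }
  destruct (retiming_exists P) as (psi & Hpsi & Hpts).
  { intros p Hp; destruct (HP p Hp) as (c & Hc & Hvc & ->); simpl.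
    pose proof (base_fp (- v c)); pose proof (base_fp (- w c)).
    destruct (proj2 (Hequiv c Hc) Hvc) as (_ & Hzero & _).
    repeat split; try lra; tauto. }
  { intros p p' Hp Hp'.
    destruct (HP p Hp) as (c & Hc & Hvc & ->), (HP p' Hp') as (d & Hd & Hvd & ->); simpl.
    apply (proj2 (Hequiv c Hc) Hvc); auto. }
  assert (HN : psi (INR N) = INR N) by (rewrite INR_IZR_INZ; apply retiming_IZR; auto).
  assert (HNM : psi (INR N - M) = INR N - M)
    by (rewrite !INR_IZR_INZ, <- minus_IZR; apply retiming_IZR; auto).
  exists (retime_val psi (INR N) v); split.
  - pose proof (reaches_retiming psi _ _ _ _ _ _ Hpsi Hreach) as Hretimed.
    rewrite retime_val_zero, (retiming_0 psi Hpsi), HN in Hretimed; exact Hretimed.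
  - intros c Hc; unfold retime_val; rewrite HN.
    destruct (Hequiv c Hc) as [Hbound Hreg]; destruct (Rle_dec (v c) M) as [Hvc|Hvc].
    + left; destruct (Hreg Hvc) as (Hint & _ & _).
      assert (Hin : In (frac_part (- v c), frac_part (- w c)) P).
      { apply in_map_iff; exists c; split; [reflexivity|].
        apply filter_In; split; [exact Hc|].
        unfold below_max; destruct Rle_dec; [reflexivity | lra]. }
      specialize (Hpts _ Hin); simpl in Hpts.
      replace (INR N - v c) with (frac_part (- v c) + IZR (Int_part (- v c) + Z.of_nat N))
        by (rewrite plus_IZR, <- INR_IZR_INZ; unfold frac_part; ring).
      rewrite retiming_add_IZR, Hpts, plus_IZR, <- INR_IZR_INZ, Hint by auto.
      unfold frac_part; ring.
    + right; split; [|apply Rnot_le_gt; rewrite <- Hbound; exact Hvc].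
      assert (psi (INR N - v c) < psi (INR N - M)) by (apply retiming_lt; auto; lra).
      lra.
Qed.

Definition reachable_keys (n : nat) (kappa : Loc A * list (option (Z * bool * list bool))) :=
  exists q v, reachable_at (INR n) q v /\ region_key q v = kappa.

Definition key_step (kappa kappa' : Loc A * list (option (Z * bool * list bool))) :=
  exists q w q' w' (a : nat), region_key q w = kappa /\
    reaches q w (INR a) q' w' (INR (S a)) /\ region_key q' w' = kappa'.

Lemma reachable_keys_S (n : nat) kappa' :
  reachable_keys (S n) kappa' <-> exists kappa, reachable_keys n kappa /\ key_step kappa kappa'.
Proof.
  split.
  - intros (q' & v' & Hreach & <-).
    destruct (reaches_split _ _ _ _ _ _ (INR n) Hreach) as (q & v & H1 & H2).
    { split; [apply pos_INR | rewrite S_INR; lra]. }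
    exists (region_key q v); split; [exists q, v; auto | exists q, v, q', v', n; auto].
  - intros (kappa & (q1 & v1 & Hreach & <-) & (q & w & q' & w' & a & Hk & Hstep & <-)).
    destruct (region_key_equiv _ _ _ _ (eq_sym Hk)) as [<- Hequiv].
    destruct (reachable_at_region_transfer _ _ _ _ Hreach Hequiv) as (v2 & Hreach2 & Hv2).
    destruct (reaches_max_equiv _ _ _ _ _ _ v2 (INR n - INR a) Hstep Hv2) as (w2 & Hstep2 & Hw2).
    replace (INR a + (INR n - INR a)) with (INR n) in Hstep2 by ring.
    replace (INR (S a) + (INR n - INR a)) with (INR (S n)) in Hstep2 by (rewrite !S_INR; ring).
    exists q', w2; split; [eapply reaches_trans; eauto | apply region_key_max_equiv; exact Hw2].
Qed.

Definition all_keys : list (Loc A * list (option (Z * bool * list bool))) :=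
  list_prod (locs Sigma A)
    (words (length Clocks)
       (None :: map Some
          (list_prod
             (list_prod (map (fun n => (- Z.of_nat n)%Z) (seq 0 (S max_const)))
                (true :: false :: nil))
             (words (length Clocks) (true :: false :: nil))))).

Lemma region_key_in_all_keys (q : Loc A) (v : valuation) :
  In q (locs Sigma A) -> (forall c, 0 <= v c) -> In (region_key q v) all_keys.
Proof.
  intros Hq Hv; apply in_prod; [exact Hq|]; apply in_words; [apply length_map|].
  intros r Hr; apply in_map_iff in Hr; destruct Hr as (c & <- & Hc).
  unfold clock_region; destruct Rle_dec as [Hvc|]; [right | left; reflexivity].
  apply in_map, in_prod; [apply in_prod|].
  - assert (Hlo : (- Z.of_nat max_const <= Int_part (- v c))%Z).
    { rewrite <- (Int_part_unique (- M) (- Z.of_nat max_const))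
        by (rewrite opp_IZR, <- INR_IZR_INZ; lra).
      apply Int_part_le; lra. }
    assert (Hhi : (Int_part (- v c) <= 0)%Z).
    { rewrite <- (Int_part_unique 0 0) by (simpl; lra).
      apply Int_part_le; specialize (Hv c); lra. }
    apply in_map_iff; exists (Z.to_nat (- Int_part (- v c))).
    split; [lia | apply in_seq; lia].
  - destruct Req_EM_T; simpl; auto.
  - apply in_words; [apply length_map|]; intros b _; destruct b; simpl; auto.
Qed.

Lemma reachable_keys_periodic : exists i L, (L > 0)%nat /\
  forall n n' (z : Z) kappa, (i <= n)%nat -> (i <= n')%nat ->
    Z.of_nat n' = (Z.of_nat n + Z.of_nat L * z)%Z ->
    (reachable_keys n kappa <-> reachable_keys n' kappa).
Proof.
  apply (iterated_image_eventually_periodic reachable_keys all_keys key_step);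
    [|apply reachable_keys_S].
  intros n kappa (q & v & Hreach & <-).
  destruct (reaches_wf _ _ _ _ _ _ Hreach) as [Hq Hv]; [apply q0_in | intros; lra|].
  apply region_key_in_all_keys; auto.
Qed.

Lemma in_lang_shift_suffix (N N' : nat) pre (x : R * Sigma) suf :
  (forall kappa, reachable_keys N kappa -> reachable_keys N' kappa) ->
  in_lang A (pre ++ x :: suf) -> INR N <= fst x ->
  exists pre', in_lang A (pre' ++ shift_trace (INR N' - INR N) (x :: suf)).
Proof.
  intros Hkeys (steps & Hrun & Hobs) Hx.
  destruct (run_ok_cut _ _ _ _ _ _ _ (INR N) Hrun Hobs) as (q & v & rest & mid & Hreach & Hrest & Hmid).
  { split; [apply pos_INR | exact Hx]. }
  destruct (Hkeys (region_key q v)) as (q1 & v1 & Hreach1 & Hk); [exists q, v; auto|].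
  destruct (region_key_equiv _ _ _ _ Hk) as [<- Hequiv].
  destruct (reachable_at_region_transfer _ _ _ _ Hreach1 Hequiv) as (v2 & Hreach2 & Hv2).
  destruct (reaches_run _ _ _ _ _ _ rest Hreach2 (run_ok_max_equiv _ _ _ _ Hv2 Hrest))
    as (steps' & pre0 & Hrun' & Hobs').
  exists (pre0 ++ shift_trace (INR N' - INR N) mid), steps'; split; [exact Hrun'|].
  replace (INR N') with (INR N + (INR N' - INR N)) in Hobs' by ring.
  rewrite Hobs', obs_trace_shift, Hmid; unfold shift_trace.
  rewrite map_app, app_assoc; reflexivity.
Qed.

End Automaton.

Theorem theorem2 (Sigma : Type) (A : eNTA Sigma) :
  exists (tper : R) (L : nat), tper > 0 /\ (L > 0)%nat /\
    forall (pre : list (R * Sigma)) (tr : R) (ar : Sigma) (suf : list (R * Sigma)),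
      in_lang A (pre ++ (tr, ar) :: suf) ->
      tr > tper ->
      forall k : Z,
        let K := IZR (Z.of_nat L * k) in
        tr + K > tper ->
        exists pre' : list (R * Sigma),
          in_lang A (pre' ++ shift_trace K ((tr, ar) :: suf)).
Proof.
  destruct (reachable_keys_periodic Sigma A) as (i & L & HL & Hper).
  exists (INR i + 1), L; split; [pose proof (pos_INR i); lra | split; [exact HL|]].
  intros pre tr ar suf Hlang Htr k K HK; unfold K in *.
  pose proof (Int_part_bounds tr) as Hfloor; set (z := Int_part tr) in *.
  assert (Hz : (Z.of_nat i < z)%Z) by (apply lt_IZR; rewrite <- INR_IZR_INZ; lra).
  assert (Hz' : (Z.of_nat i < z + Z.of_nat L * k)%Z)
    by (apply lt_IZR; rewrite plus_IZR, <- INR_IZR_INZ; lra).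
  replace (IZR (Z.of_nat L * k)) with (INR (Z.to_nat (z + Z.of_nat L * k)) - INR (Z.to_nat z))
    by (rewrite !INR_IZR_INZ, !Z2Nat.id, plus_IZR by lia; ring).
  apply in_lang_shift_suffix with (pre := pre); [| exact Hlang |].
  - intros kappa; apply (Hper (Z.to_nat z) _ k); lia.
  - rewrite INR_IZR_INZ, Z2Nat.id by lia; simpl; lra.
Qed.
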